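(* Let $n\ge3$, let $e_1,\dots,e_n\ge1$ be integers with $E=e_1e_2\cdots e_n\ge2$, let $c=\max\{e_1,\dots,e_n\}$, and let $R$ be a commutative unital ring in which $c!$ is invertible. Then for all distinct $i,j\in\{1,\dots,n\}$, all integers $m\ge0$ and all $r\in R$, the group $G_{R,n;e_1,\dots,e_n}$ contains $\alpha_{i;j}^{(t)}(r)$ where $t=t_{i,j}+m(E-1)$ and $t_{i,j}=e_ie_{i+1}\cdots e_{j-1}$ (indices ordered cyclically and taken modulo $n$). Consequently, for every polynomial $P\in R[y]$ and distinct $i,j$, $G_{R,n;e_1,\dots,e_n}$ contains the automorphism with $x_i\mapsto x_i+x_j^{t_{i,j}}P(x_j^{E-1})$ and $x_\ell\mapsto x_\ell$ for $\ell\ne i$.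
   Context: For distinct $i,j$, $e\ge0$, $r\in R$: $\alpha_{i;j}^{(e)}(r)\in\mathrm{Aut}(R[x_1,\dots,x_n])$ maps $x_i\mapsto x_i+rx_j^e$ and fixes $x_\ell$ for $\ell\ne i$. $G_{R,n;e_1,\dots,e_n}$ is the subgroup generated by $\{\alpha_{i;i+1}^{(e_i)}(r): 1\le i\le n, r\in R\}$, indices modulo $n$. The product $t_{i,j}$ runs cyclically from $e_i$ to $e_{j-1}$, e.g. $t_{i,i+1}=e_i$ and $t_{n,2}=e_ne_1$. *)

From HB Require Import structures.
From mathcomp Require Import all_boot all_order all_algebra.
From mathcomp Require Export mpoly.
Set Implicit Arguments. Unset Strict Implicit. Unset Printing Implicit Defensive.
Import GRing.Theory.
Local Open Scope ring_scope.

(* An R-algebra endomorphism of R[x_0,...,x_{n-1}] is represented by the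
   n-tuple of the images of the variables; it acts on p by p \mPo phi. *)
Definition endo (R : comNzRingType) (n : nat) := n.-tuple {mpoly R[n]}.

Definition endo_id (R : comNzRingType) (n : nat) : endo R n :=
  [tuple 'X_i | i < n].

(* composition: (endo_comp f g) = f o g, i.e. x_i |-> f (g (x_i)) *)
Definition endo_comp (R : comNzRingType) (n : nat) (f g : endo R n) : endo R n :=
  [tuple (tnth g i \mPo f) | i < n].

Definition alpha (R : comNzRingType) (n : nat) (i j : 'I_n) (e : nat) (r : R)
  : endo R n :=
  [tuple (if l == i then 'X_i + r *: 'X_j ^+ e else 'X_l) | l < n].

Definition succI (n : nat) (i : 'I_n) : 'I_n := ordS i.

(* G_{R,n;e}: the subgroup of Aut(R[x]) generated by the alpha_{i;i+1}^{(e_i)}(r),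
   defined as the smallest set of endomorphisms containing the identity and the
   generators, closed under composition and under taking two-sided inverses. *)
Inductive inG (R : comNzRingType) (n : nat) (e : 'I_n -> nat) : endo R n -> Prop :=
  | inG_id : inG e (endo_id R n)
  | inG_gen (i : 'I_n) (r : R) : inG e (alpha i (succI i) (e i) r)
  | inG_comp f g : inG e f -> inG e g -> inG e (endo_comp f g)
  | inG_inv f g : inG e f -> endo_comp f g = endo_id R n ->
                  endo_comp g f = endo_id R n -> inG e g.

(* t_{i,j} = e_i e_{i+1} ... e_{j-1}, indices cyclic modulo n *)
Definition tij (n : nat) (e : 'I_n -> nat) (i j : 'I_n) : nat :=
  \prod_(k < (j + n - i) %% n) e (iter k (@succI n) i).

(* Write T_i(f) for the automorphism x_i |-> x_i + f, where f does not involve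
   x_i.  Such maps compose additively, and conjugating T_i(h) by T_l(g)
   substitutes x_l + g for x_l in h.  Hence the f with T_i(r f) in G for all r
   form an R-module M_i, stable under x_l |-> x_l + s g whenever all T_l(s g)
   lie in G.  Expanding (x_l + s g)^d and separating the powers of s by a
   Vandermonde determinant in 0, 1, ..., d (a unit since c! is) allows one to
   replace factors x_l of an element of M_i by g, one at a time.  Starting from
   the generators x_{i+1}^{e_i} in M_i, this yields alpha_{i;j}^{(t_{i,j})} by
   induction on the cyclic distance from i to j; going once more around the
   cycle, through x_{i+1}^{e_i - 1} x_{i+2}^{e_{i+1}}, multiplies in
   x_{i+1}^{E-1}, which gives the shifted exponents by induction on m.  The
   statement about P follows as M_i is an R-module. *)

From HB Require Import structures.
From mathcomp Require Import all_boot all_order all_algebra.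
From mathcomp Require Import mpoly.
From mathcomp Require Import zify.
Set Implicit Arguments. Unset Strict Implicit. Unset Printing Implicit Defensive.
Import GRing.Theory.
Local Open Scope ring_scope.

Definition invertible (R : comNzRingType) (x : R) := exists y, y * x = 1.

Lemma invertibleM (R : comNzRingType) (x y : R) :
  invertible x -> invertible y -> invertible (x * y).
Proof. by move=> [a Ha] [b Hb]; exists (a * b); rewrite mulrACA Ha Hb mul1r. Qed.

Lemma invertible_natr_dvd (R : comNzRingType) (m N : nat) :
  invertible (N%:R : R) -> (m %| N)%N -> invertible (m%:R : R).
Proof.
by move=> [y Hy] /dvdnP [q def_N]; exists (y * q%:R); rewrite -mulrA -natrM -def_N.
Qed.

Section VandermondeExtraction.
Variables (R : comNzRingType) (V : lmodType R) (P : V -> Prop).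
Hypotheses (P0 : P 0) (PD : forall x y, P x -> P y -> P (x + y))
  (PZ : forall a x, P x -> P (a *: x)).

(* The coefficients of a polynomial in s are recovered from its values at
   s = 0, 1, ..., d through the adjugate of the Vandermonde matrix, whose
   determinant is a product of differences 1, ..., d. *)
Lemma vandermonde_coef_closed (d : nat) (q : 'I_d.+1 -> V) :
  (forall k, (0 < k <= d)%N -> invertible (k%:R : R)) ->
  (forall s : R, P (\sum_(k < d.+1) s ^+ k *: q k)) -> forall k, P (q k).
Proof.
move=> inv_small Pvalues k.
pose a : 'rV[R]_d.+1 := \row_(j < d.+1) (j%:R : R).
pose W := Vandermonde d.+1 a.
have [y Hy] : invertible (\det W).
  rewrite det_Vandermonde.
  apply: (big_ind (@invertible R)); [by exists 1; rewrite mulr1 | exact: invertibleM |].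
  move=> i _; apply: (big_ind (@invertible R)).
  - by exists 1; rewrite mulr1.
  - exact: invertibleM.
  move=> j lt_ij; rewrite !mxE -natrB 1?ltnW //; apply: inv_small.
  by rewrite subn_gt0 lt_ij leq_subLR -ltnS (leq_trans (ltn_ord j)) // ltnS leq_addl.
have adj_combination : \det W *: q k =
    \sum_(j < d.+1) (\adj W) j k *: (\sum_(l < d.+1) (a 0 j) ^+ l *: q l).
  transitivity (\sum_(l < d.+1) (W *m \adj W) l k *: q l).
    rewrite mul_mx_adj (bigD1 k) //= big1 ?addr0; first by rewrite !mxE eqxx mulr1n.
    by move=> l nlk; rewrite !mxE (negbTE nlk) mulr0n scale0r.
  rewrite (eq_bigr (fun l => \sum_(j < d.+1) (W l j * \adj W j k) *: q l)); last first.
    by move=> l _; rewrite !mxE scaler_suml.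
  rewrite exchange_big /=; apply: eq_bigr => j _; rewrite scaler_sumr.
  by apply: eq_bigr => l _; rewrite scalerA mulrC !mxE.
rewrite -[q k]scale1r -Hy -scalerA adj_combination.
by apply/PZ; apply: (big_ind P P0 PD) => j _; apply/PZ.
Qed.

End VandermondeExtraction.

Section Elementary.
Variables (R : comNzRingType) (n : nat).
Local Notation A := {mpoly R[n]}.

Lemma comp_mpolyX_tnth (l : 'I_n) (t : n.-tuple A) : 'X_l \mPo t = tnth t l.
Proof. by rewrite comp_mpolyXU (tnth_nth 0). Qed.

Lemma comp_mpoly_endo_comp (p : A) (f g : endo R n) :
  p \mPo g \mPo f = p \mPo endo_comp f g.
Proof.
rewrite [p \mPo g]comp_mpolyEX [RHS]comp_mpolyEX raddf_sum /=; apply: eq_bigr => m _.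
rewrite comp_mpolyZ !comp_mpolyX rmorph_prod /=; congr (_ *: _).
by apply: eq_bigr => l _; rewrite rmorphXn /= tnth_mktuple.
Qed.

Definition elem (i : 'I_n) (f : A) : endo R n :=
  [tuple (if l == i then 'X_i + f else 'X_l) | l < n].

Lemma tnth_elem i f l : tnth (elem i f) l = if l == i then 'X_i + f else 'X_l.
Proof. by rewrite tnth_mktuple. Qed.

(* "h does not involve x_i", phrased through substitution so that it is
   stable under all the ring operations without any monomial bookkeeping. *)
Definition free_of (i : 'I_n) (h : A) := forall t t' : n.-tuple A,
  (forall l, l != i -> tnth t l = tnth t' l) -> h \mPo t = h \mPo t'.

Lemma free_of_comp_elem i h f : free_of i h -> h \mPo elem i f = h.
Proof.
move=> hi; rewrite -[RHS](comp_mpoly_id h); apply: hi => l ne.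
by rewrite tnth_elem (negbTE ne) tnth_mktuple.
Qed.

Lemma free_ofX i l : l != i -> free_of i 'X_l.
Proof. by move=> ne t t' E; rewrite !comp_mpolyX_tnth E. Qed.

Lemma free_of0 i : free_of i 0.
Proof. by move=> t t' _; rewrite !comp_mpoly0. Qed.

Lemma free_of1 i : free_of i 1.
Proof. by move=> t t' _; rewrite !comp_mpoly1. Qed.

Lemma free_ofN i f : free_of i f -> free_of i (- f).
Proof. by move=> hf t t' E; rewrite !comp_mpolyN (hf t t' E). Qed.

Lemma free_ofZ i a f : free_of i f -> free_of i (a *: f).
Proof. by move=> hf t t' E; rewrite !comp_mpolyZ (hf t t' E). Qed.

Lemma free_ofD i f g : free_of i f -> free_of i g -> free_of i (f + g).
Proof. by move=> hf hg t t' E; rewrite !comp_mpolyD (hf t t' E) (hg t t' E). Qed.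

Lemma free_ofM i f g : free_of i f -> free_of i g -> free_of i (f * g).
Proof. by move=> hf hg t t' E; rewrite !rmorphM /= (hf t t' E) (hg t t' E). Qed.

Lemma free_ofXn i f k : free_of i f -> free_of i (f ^+ k).
Proof. by move=> hf t t' E; rewrite !rmorphXn /= (hf t t' E). Qed.

Lemma free_of_XnX i l k : l != i -> free_of i ('X_l ^+ k).
Proof. by move=> ne; apply/free_ofXn/free_ofX. Qed.

Lemma free_of_comp i l h g :
  l != i -> free_of i h -> free_of i g -> free_of i (h \mPo elem l g).
Proof.
move=> ne hh hg t t' E; rewrite !comp_mpoly_endo_comp; apply: hh => m nm.
rewrite !tnth_mktuple; case: ifP => [/eqP Eml|_]; last by rewrite !comp_mpolyX_tnth E.
by subst m; rewrite !comp_mpolyD !comp_mpolyX_tnth (E l ne) (hg t t').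
Qed.

Lemma elem0 i : elem i 0 = endo_id R n.
Proof.
apply: eq_from_tnth => l; rewrite tnth_elem tnth_mktuple addr0.
by case: eqP => [->|].
Qed.

Lemma elemD i f g : free_of i g -> endo_comp (elem i f) (elem i g) = elem i (f + g).
Proof.
move=> hg; apply: eq_from_tnth => l; rewrite tnth_mktuple !tnth_elem.
case: ifP => [/eqP Eli|ne]; last by rewrite comp_mpolyX_tnth tnth_elem ne.
by subst l; rewrite comp_mpolyD comp_mpolyX_tnth tnth_elem eqxx free_of_comp_elem // addrA.
Qed.

Lemma elem_conj i l h g : l != i -> free_of i g -> free_of l g -> free_of i h ->
  endo_comp (elem l g) (endo_comp (elem i h) (elem l (- g))) = elem i (h \mPo elem l g).
Proof.
move=> ne gi gl hi; apply: eq_from_tnth => m; rewrite !tnth_mktuple.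
have nil : (i == l) = false by rewrite eq_sym (negbTE ne).
case: (eqVneq m i) => [->|nmi].
  by rewrite nil comp_mpolyX_tnth tnth_elem eqxx comp_mpolyD comp_mpolyX_tnth tnth_elem nil.
case: (eqVneq m l) => [->|nml].
  rewrite comp_mpolyD comp_mpolyX_tnth tnth_elem (negbTE ne).
  rewrite (free_of_comp_elem _ (free_ofN gi)) comp_mpolyD comp_mpolyX_tnth tnth_elem eqxx.
  by rewrite (free_of_comp_elem _ (free_ofN gl)) addrK.
by rewrite comp_mpolyX_tnth tnth_elem (negbTE nmi) comp_mpolyX_tnth tnth_elem (negbTE nml).
Qed.

Variable e : 'I_n -> nat.
Local Notation G := (inG e).

Lemma inG_elemN i f : free_of i f -> G (elem i f) -> G (elem i (- f)).
Proof.
move=> fi Gf; apply: (inG_inv Gf).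
  by rewrite elemD ?subrr ?elem0 //; apply: free_ofN.
by rewrite elemD // addNr elem0.
Qed.

Lemma inG_elem_conj i l h g : l != i -> free_of i g -> free_of l g -> free_of i h ->
  G (elem l g) -> G (elem i h) -> G (elem i (h \mPo elem l g)).
Proof.
move=> ne gi gl hi Gg Gh; rewrite -elem_conj //.
by apply: inG_comp => //; apply: inG_comp => //; apply: inG_elemN.
Qed.

Definition admissible i h := free_of i h /\ forall r : R, G (elem i (r *: h)).

Lemma admissible0 i : admissible i 0.
Proof. by split=> [|r]; [exact: free_of0 | rewrite scaler0 elem0; exact: inG_id]. Qed.

Lemma admissibleD i f g : admissible i f -> admissible i g -> admissible i (f + g).
Proof.
move=> [fi Gf] [gi Gg]; split=> [|r]; first exact: free_ofD.
by rewrite scalerDr -elemD; [apply: inG_comp | apply: free_ofZ].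
Qed.

Lemma admissibleZ i a f : admissible i f -> admissible i (a *: f).
Proof. by move=> [fi Gf]; split=> [|r]; [exact: free_ofZ | rewrite scalerA]. Qed.

Lemma admissible_comp_elem i l h g : l != i -> free_of i g -> free_of l g ->
  (forall s : R, G (elem l (s *: g))) ->
  admissible i h -> forall s : R, admissible i (h \mPo elem l (s *: g)).
Proof.
move=> ne gi gl Gg [hi Gh] s; split=> [|r].
  by apply: free_of_comp => //; apply: free_ofZ.
by rewrite -comp_mpolyZ; apply: inG_elem_conj => //; apply: free_ofZ.
Qed.

(* Apply x_l |-> x_l + s g to x_l^d N, expand, and extract the coefficient of s^k. *)
Lemma admissible_trade i l (g N : A) (d : nat) :
  l != i -> free_of i g -> free_of l g -> free_of l N ->
  (forall s : R, G (elem l (s *: g))) -> invertible (d`!%:R : R) ->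
  admissible i ('X_l ^+ d * N) ->
  forall k, (k <= d)%N -> admissible i ('X_l ^+ (d - k) * g ^+ k * N).
Proof.
move=> ne gi gl Nl Gg inv_d hd k le_kd.
have inv_small k' : (0 < k' <= d)%N -> invertible (k'%:R : R).
  by move=> /dvdn_fact; apply: invertible_natr_dvd.
have [y Hy] : invertible ('C(d, k)%:R : R).
  by apply: (invertible_natr_dvd inv_d); rewrite -(bin_fact le_kd) dvdn_mulr.
have expand s : admissible i (\sum_(k' < d.+1)
    s ^+ k' *: ('X_l ^+ (d - k') * g ^+ k' * N *+ 'C(d, k'))).
  have := admissible_comp_elem ne gi gl Gg hd s.
  rewrite rmorphM /= rmorphXn /= comp_mpolyX_tnth tnth_elem eqxx.
  rewrite free_of_comp_elem // exprDn mulr_suml; congr admissible; apply: eq_bigr => k' _.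
  by rewrite exprZn mulrnAl -scalerAr -scalerAl scalerMnr.
have := vandermonde_coef_closed (@admissible0 i) (@admissibleD i) (@admissibleZ i)
  inv_small expand (Ordinal (leq_ltn_trans le_kd (ltnSn d))).
by move=> /(admissibleZ y) /=; rewrite -scaler_nat scalerA Hy scale1r.
Qed.

End Elementary.

Section CyclicIndex.
Variable n : nat.
Local Open Scope nat_scope.

Lemma succI_val (i : 'I_n) : succI i = (if i.+1 < n then i.+1 else 0) :> nat.
Proof.
have lt_in := ltn_ord i; rewrite /succI /=.
case: ltnP => [lt_Sn|le_nS]; first by rewrite modn_small.
have -> : i.+1 = n by lia.
by rewrite modnn.
Qed.

Lemma succI_neq (i : 'I_n) : 1 < n -> succI i != i.
Proof.
move=> n_gt1; apply/eqP => /(congr1 (@nat_of_ord n)); rewrite succI_val.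
by have := ltn_ord i; case: (ltnP i.+1 n) => /=; lia.
Qed.

Lemma succI2_neq (i : 'I_n) : 2 < n -> succI (succI i) != i.
Proof.
move=> n_gt2; apply/eqP => /(congr1 (@nat_of_ord n)); rewrite !succI_val.
by have := ltn_ord i; case: (ltnP i.+1 n) => /=; repeat case: ifP; lia.
Qed.

Lemma iter_succI_val (j : 'I_n) k : iter k (@succI n) j = (j + k) %% n :> nat.
Proof.
elim: k => [|k IH]; first by rewrite addn0 modn_small.
by rewrite iterS /= IH -addn1 modnDml addn1 addnS.
Qed.

Definition cdist (i j : 'I_n) := (j + n - i) %% n.

Lemma cdistE (i j : 'I_n) : cdist i j = if i <= j then j - i else j + n - i.
Proof.
have lt_in := ltn_ord i; have lt_jn := ltn_ord j; rewrite /cdist.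
case: leqP => le_ij; last by rewrite modn_small //; lia.
have -> : j + n - i = j - i + n by lia.
by rewrite modnDr modn_small //; lia.
Qed.

Lemma cdist_gt0 (i j : 'I_n) : i != j -> 0 < cdist i j.
Proof.
move=> /eqP nij; have {}nij : i <> j :> nat by move=> /val_inj.
by have := ltn_ord i; rewrite cdistE; case: ifP; lia.
Qed.

Lemma cdist_succ (i j : 'I_n) : i != j -> cdist (succI i) j = (cdist i j).-1.
Proof.
move=> /eqP nij; have {}nij : i <> j :> nat by move=> /val_inj.
have := ltn_ord i; have := ltn_ord j.
by rewrite !cdistE succI_val; case: (ltnP i.+1 n) => /=; repeat case: ifP; lia.
Qed.

Lemma cdist_from_succ (j : 'I_n) : 1 < n -> cdist (succI j) j = n.-1.
Proof.
by have := ltn_ord j; rewrite cdistE succI_val; case: (ltnP j.+1 n) => /=; repeat case: ifP; lia.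
Qed.

Lemma cdist_to_succ (i : 'I_n) : 1 < n -> cdist i (succI i) = 1.
Proof.
by have := ltn_ord i; rewrite cdistE succI_val; case: (ltnP i.+1 n) => /=; repeat case: ifP; lia.
Qed.

Lemma cyclic_ind (j : 'I_n) (P : 'I_n -> Prop) :
  (forall i, succI i = j -> P i) ->
  (forall i, i != j -> succI i != j -> P (succI i) -> P i) ->
  forall i, i != j -> P i.
Proof.
move=> base step; suff H d i : i != j -> cdist i j = d -> P i by move=> i /H; apply.
elim: d i => [|d IH] i nij di; first by have := cdist_gt0 nij; rewrite di.
case: (eqVneq (succI i) j) => [/base //|nsj].
by apply: step => //; apply: IH => //; rewrite cdist_succ // di.
Qed.

Variable e : 'I_n -> nat.

Lemma tij_succ (i : 'I_n) : 1 < n -> tij e i (succI i) = e i.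
Proof. by move=> n_gt1; rewrite /tij -/(cdist _ _) cdist_to_succ // big_ord1. Qed.

Lemma tij_step (i j : 'I_n) : i != j -> tij e i j = e i * tij e (succI i) j.
Proof.
move=> nij; rewrite /tij -!/(cdist _ _) cdist_succ //.
rewrite -[cdist i j](prednK (cdist_gt0 nij)) big_ord_recl /=.
by congr (_ * _); apply: eq_bigr => k _; rewrite -iterS iterSr.
Qed.

Lemma tij_cycle (j : 'I_n) : 1 < n -> tij e (succI j) j * e j = \prod_(k < n) e k.
Proof.
move=> n_gt1; rewrite /tij -/(cdist _ _) cdist_from_succ // mulnC.
have -> : \prod_(k < n) e k = \prod_(k < n) e (iter k (@succI n) j).
  apply: (reindex_inj (h := fun k : 'I_n => iter k (@succI n) j)).
  move=> k1 k2 /(congr1 val) /=; rewrite !iter_succI_val => /eqP.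
  by rewrite eqn_modDl !modn_small // => /eqP /val_inj.
have prod_split (F : nat -> nat) :
    \prod_(0 <= k < n) F k = F 0 * \prod_(0 <= k < n.-1) F k.+1.
  by rewrite -[in LHS](prednK (ltnW n_gt1)) big_nat_recl.
rewrite -(big_mkord xpredT (fun k => e (iter k (@succI n) j))).
rewrite -(big_mkord xpredT (fun k => e (iter k (@succI n) (succI j)))) prod_split /=.
by congr (_ * _); apply: eq_bigr => k _; rewrite -iterS iterSr.
Qed.

End CyclicIndex.

Section Alphas.
Variables (R : comNzRingType) (n : nat) (e : 'I_n -> nat).
Hypotheses (n_ge3 : (3 <= n)%N) (e_gt0 : forall k, (0 < e k)%N).
Hypothesis fact_max_invertible : invertible (((\max_(k < n) e k)`!)%:R : R).
Local Notation E := (\prod_(k < n) e k).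
Local Notation G := (inG e).

Definition alphas_inG (i j : 'I_n) (t : nat) := forall r : R, G (alpha i j t r).

Lemma n_gt1 : (1 < n)%N. Proof. exact: leq_trans n_ge3. Qed.

Lemma invertible_fact_le_e (k : 'I_n) d : (d <= e k)%N -> invertible ((d`!)%:R : R).
Proof.
move=> le_d; apply: (invertible_natr_dvd fact_max_invertible).
by rewrite (fact_split (leq_trans le_d (leq_bigmax k))) dvdn_mulr.
Qed.

Lemma admissible_generator (i : 'I_n) :
  admissible e i ('X_(succI i) ^+ e i * 1 : {mpoly R[n]}).
Proof.
rewrite mulr1; split=> [|r]; last exact: inG_gen.
by apply: free_of_XnX; apply: succI_neq n_gt1.
Qed.

(* x_k^{e_i} ~> x_k^{e_i - 1} x_j^a ~> x_j^{t (e_i - 1) + a}, where k = i + 1. *)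
Lemma alphas_inG_pred (i j : 'I_n) (t a : nat) : i != j -> succI i != j ->
  alphas_inG (succI i) j t -> alphas_inG (succI i) j a ->
  alphas_inG i j (t * (e i - 1) + a).
Proof.
move=> nij nkj Gt Ga; set k := succI i in nkj Gt Ga *.
have nki : k != i := succI_neq i n_gt1.
have nji : j != i by rewrite eq_sym.
have njk : j != k by rewrite eq_sym.
have := admissible_trade nki (free_of_XnX _ nji) (free_of_XnX _ njk) (@free_of1 _ _ k) Ga
  (invertible_fact_le_e (leqnn _)) (admissible_generator i) (e_gt0 i).
rewrite expr1 -mulrA => step1.
have := admissible_trade nki (free_of_XnX _ nji) (free_of_XnX _ njk)
  (free_ofM (free_of_XnX _ njk) (@free_of1 _ _ k)) Gt
  (invertible_fact_le_e (leq_subr 1 (e i))) step1 (leqnn _).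
rewrite subnn expr0 mul1r mulr1 -exprM -exprD.
by case.
Qed.

(* x_j^{e_i} ~> x_j^{e_i - 1} x_l^{e_j} ~> x_j^{e_i - 1} x_l^{e_j - 1} x_j^a
   ~> x_j^{t (e_j - 1) + a + e_i - 1}, where j = i + 1 and l = i + 2. *)
Lemma alphas_inG_wrap (i : 'I_n) (t a : nat) :
  alphas_inG (succI (succI i)) (succI i) t -> alphas_inG (succI (succI i)) (succI i) a ->
  alphas_inG i (succI i) (t * (e (succI i) - 1) + (a + (e i - 1))).
Proof.
set j := succI i; set l := succI j => Gt Ga.
have nji : j != i := succI_neq i n_gt1.
have nlj : l != j := succI_neq j n_gt1.
have nli : l != i := succI2_neq i n_ge3.
have njl : j != l by rewrite eq_sym.
have := admissible_trade nji (free_of_XnX _ nli) (free_of_XnX _ nlj) (@free_of1 _ _ j)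
  (inG_gen e j) (invertible_fact_le_e (leqnn _)) (admissible_generator i) (e_gt0 i).
rewrite expr1 mulr1 mulrC => step1.
have := admissible_trade nli (free_of_XnX _ nji) (free_of_XnX _ njl) (free_of_XnX _ njl) Ga
  (invertible_fact_le_e (leqnn _)) step1 (e_gt0 j).
rewrite expr1 -mulrA => step2.
have := admissible_trade nli (free_of_XnX _ nji) (free_of_XnX _ njl)
  (free_ofM (free_of_XnX _ njl) (free_of_XnX _ njl)) Gt
  (invertible_fact_le_e (leq_subr 1 (e j))) step2 (leqnn _).
rewrite subnn expr0 mul1r -exprM -!exprD.
by case.
Qed.

Lemma tij_split (i j : 'I_n) : i != j ->
  tij e i j = (tij e (succI i) j * (e i - 1) + tij e (succI i) j)%N.
Proof. by move=> nij; rewrite (tij_step e nij) -mulnSr subn1 prednK // mulnC. Qed.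

Lemma alphas_inG_tij (i j : 'I_n) : i != j -> alphas_inG i j (tij e i j).
Proof.
move: i; apply: cyclic_ind => [i <- | i nij nsj IH].
  by rewrite tij_succ ?n_gt1 //; apply: inG_gen.
by rewrite tij_split //; apply: alphas_inG_pred.
Qed.

Lemma alphas_inG_tij_shift (i j : 'I_n) m :
  i != j -> alphas_inG i j (tij e i j + m * (E - 1)).
Proof.
elim: m i j => [|m IHm] i j nij; first by rewrite mul0n addn0; apply: alphas_inG_tij.
move: i nij; apply: cyclic_ind => [i <- | i nij nsj IH].
  clear j; set j := succI i; set t := tij e (succI j) j.
  have cycle : (t * e j)%N = E := tij_cycle e j n_gt1.
  suff -> : (tij e i j + m.+1 * (E - 1))%N =
             (t * (e j - 1) + (t + m * (E - 1) + (e i - 1)))%N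
    by apply: alphas_inG_wrap; [apply: alphas_inG_tij | apply: IHm]; apply: succI_neq n_gt1.
  rewrite tij_succ ?n_gt1 // -cycle mulSn.
  have : (t * (e j - 1) + t = t * e j)%N by rewrite -mulnSr subn1 prednK.
  have : (0 < t)%N by apply: prodn_gt0.
  have := e_gt0 i; have := leq_pmulr t (e_gt0 j).
  by set P := (t * e j)%N; set M := (m * (P - 1))%N; lia.
by rewrite tij_split // -addnA; apply: alphas_inG_pred => //; apply: alphas_inG_tij.
Qed.

End Alphas.

Theorem mainTheorem9 (R : comNzRingType) (n : nat) (e : 'I_n -> nat) :
  (3 <= n)%N ->
  (forall k, 1 <= e k)%N ->
  (2 <= \prod_(k < n) e k)%N ->
  (exists u : R, u * ((\max_(k < n) e k)`!)%:R = 1) ->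
  (forall (i j : 'I_n), i != j -> forall (m : nat) (r : R),
     inG e (alpha i j (tij e i j + m * (\prod_(k < n) e k - 1)) r))
  /\
  (forall (P : {poly R}) (i j : 'I_n), i != j ->
     inG e [tuple (if l == i then
                     'X_i + 'X_j ^+ (tij e i j)
                            * (map_poly (@mpolyC n R) P).['X_j ^+ (\prod_(k < n) e k - 1)]
                   else 'X_l) | l < n]).
Proof.
move=> n_ge3 e_gt0 _ fact_max_invertible.
have shifted := alphas_inG_tij_shift n_ge3 e_gt0 fact_max_invertible.
split=> [i j nij m r | P i j nij]; first exact: shifted.
suff [_] : admissible e i ('X_j ^+ tij e i j *
    (map_poly (@mpolyC n R) P).['X_j ^+ (\prod_(k < n) e k - 1)]).
  by move=> /(_ 1); rewrite scale1r.
rewrite horner_coef mulr_sumr; apply: (big_ind (admissible e i)) => [|f g|k _].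
- exact: admissible0.
- exact: admissibleD.
rewrite coef_map /= mul_mpolyC -scalerAr -exprM -exprD; apply: admissibleZ.
split=> [|r]; first by apply: free_of_XnX; rewrite eq_sym.
by rewrite mulnC; apply: shifted.
Qed.
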